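(* Suppose $\rho^w$ and $\rho^b$ are convex risk measures. Then an equal risk price without commitment exists if and only if the fair price interval $[-\varrho^b_\tau(0),\ \varrho^w_\tau(0)]$ is bounded. Moreover, when it exists it equals the center of this interval, $p_0^*=(\varrho^w_\tau(0)-\varrho^b_\tau(0))/2$.
   Context: Discrete-time setting: filtered probability space $(\Omega,\mathcal{F},(\mathcal{F}_t),\mathbb{P})$, zero interest rate, risky asset with $S_k:=S_{t_k}$ at trading dates $t_0<\dots<t_{K-1}<t_K=T$, $\Delta S_{k+1}=S_{k+1}-S_k$, adapted auxiliary process $Y_k$. Exercise times are stopping times $\tau:\Omega\to\{0,\dots,K\}$ with payoff $F(S_\tau,Y_\tau)=\sum_k\mathbf{1}\{\tau=k\}F_k(S_k,Y_k)$. $\bar{\mathcal{X}}_\tau(p_0)$: wealth processes with $X^\tau_0=p_0$, $X^\tau_{k+1}(\tau)=X^\tau_k(\tau)+(\xi_k\mathbf{1}\{\tau>k\}+\sum_{i=0}^k\hat\xi^i_k\mathbf{1}\{\tau=i\})\Delta S_{k+1}$ for every $\tau$, with $\xi_k,\hat\xi^i_k$ $\mathcal{F}_{t_k}$-measurable. A convex risk measure is monotone, translation invariant, normalized and convex. Define $\varrho^w_\tau(p_0)=\inf_{X^\tau\in\bar{\mathcal{X}}_\tau(p_0)}\sup_\tau\rho^w(F(S_\tau,Y_\tau)-X^\tau_K(\tau))$ and $\varrho^b_\tau(p_0)=\inf_{X^\tau\in\bar{\mathcal{X}}_\tau(-p_0)}\inf_\tau\rho^b(-F(S_\tau,Y_\tau)-X^\tau_K(\tau))$.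 The equal risk price without commitment is the unique $p_0^*$ with $\varrho^w_\tau(p_0^* )=\varrho^b_\tau(p_0^* )\in\mathbb{R}$. *)

From HB Require Import structures.
From mathcomp Require Import all_boot all_order all_algebra.
From mathcomp Require Import all_classical all_reals all_analysis.
Set Implicit Arguments. Unset Strict Implicit. Unset Printing Implicit Defensive.
Import Order.TTheory GRing.Theory Num.Theory.
Local Open Scope classical_set_scope.
Local Open Scope ring_scope.

Section Defs.
Context (R : realType) (d0 : measure_display) (Omega : measurableType d0).

Definition filtration (G : nat -> set (set Omega)) (K : nat) : Prop :=
  (forall k, (k <= K)%N -> sigma_algebra setT (G k)) /\
  (forall k, (k <= K)%N -> G k `<=` measurable) /\
  (forall k l, (k <= l <= K)%N -> G k `<=` G l).

Definition measurable_wrt {d : measure_display} {T : measurableType d}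
  (G : set (set Omega)) (f : Omega -> T) : Prop :=
  forall B : set T, measurable B -> G (f @^-1` B).

Definition adapted {d : measure_display} {T : measurableType d}
  (G : nat -> set (set Omega)) (K : nat) (X : nat -> Omega -> T) : Prop :=
  forall k, (k <= K)%N -> measurable_wrt (G k) (X k).

Definition stopping_time (G : nat -> set (set Omega)) (K : nat)
  (tau : Omega -> nat) : Prop :=
  (forall w, (tau w <= K)%N) /\
  (forall k, (k <= K)%N -> G k [set w | tau w = k]).

(* convex risk measure (losses convention: rho (X + c) = rho X + c) *)
Definition convex_risk_measure (rho : (Omega -> R) -> R) : Prop :=
  [/\ (forall X Y : Omega -> R, (forall w, X w <= Y w) -> rho X <= rho Y),
      (forall (X : Omega -> R) (c : R), rho (fun w => X w + c) = rho X + c),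
      rho (fun _ => 0) = 0 &
      (forall (X Y : Omega -> R) (l : R), 0 <= l <= 1 ->
         rho (fun w => l * X w + (1 - l) * Y w) <= l * rho X + (1 - l) * rho Y)].

Definition admissible (G : nat -> set (set Omega)) (K : nat)
  (xi : nat -> Omega -> R) (xih : nat -> nat -> Omega -> R) : Prop :=
  forall k, (k < K)%N ->
    measurable_wrt (G k) (xi k) /\
    (forall i, (i <= k)%N -> measurable_wrt (G k) (xih i k)).

Definition terminal_wealth (K : nat) (S : nat -> Omega -> R) (p0 : R)
  (xi : nat -> Omega -> R) (xih : nat -> nat -> Omega -> R)
  (tau : Omega -> nat) (w : Omega) : R :=
  p0 + \sum_(k < K)
     (xi k w * ((k < tau w)%N)%:R + \sum_(i < k.+1) xih i k w * (tau w == i)%:R)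
     * (S k.+1 w - S k w).

Definition payoff {d : measure_display} {V : measurableType d}
  (S : nat -> Omega -> R) (Y : nat -> Omega -> V) (F : nat -> R -> V -> R)
  (tau : Omega -> nat) (w : Omega) : R :=
  F (tau w) (S (tau w) w) (Y (tau w) w).

Local Open Scope ereal_scope.

Definition strategies (G : nat -> set (set Omega)) (K : nat) :
  set ((nat -> Omega -> R) * (nat -> nat -> Omega -> R)) :=
  [set xx | admissible G K xx.1 xx.2].

Definition writer_risk {d : measure_display} {V : measurableType d}
  (G : nat -> set (set Omega)) (K : nat) (S : nat -> Omega -> R)
  (Y : nat -> Omega -> V) (F : nat -> R -> V -> R) (rhow : (Omega -> R) -> R)
  (p0 : R) : \bar R :=
  ereal_inf [set ereal_sup
               [set (rhow (fun w => payoff S Y F tau w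
                                    - terminal_wealth K S p0 xx.1 xx.2 tau w))%:E
               | tau in stopping_time G K]
            | xx in strategies G K].

Definition buyer_risk {d : measure_display} {V : measurableType d}
  (G : nat -> set (set Omega)) (K : nat) (S : nat -> Omega -> R)
  (Y : nat -> Omega -> V) (F : nat -> R -> V -> R) (rhob : (Omega -> R) -> R)
  (p0 : R) : \bar R :=
  ereal_inf [set ereal_inf
               [set (rhob (fun w => - payoff S Y F tau w
                                    - terminal_wealth K S (- p0)%R xx.1 xx.2 tau w))%:E
               | tau in stopping_time G K]
            | xx in strategies G K].

Definition equal_risk_price {d : measure_display} {V : measurableType d}
  (G : nat -> set (set Omega)) (K : nat) (S : nat -> Omega -> R)
  (Y : nat -> Omega -> V) (F : nat -> R -> V -> R)
  (rhow rhob : (Omega -> R) -> R) (p0 : R) : Prop :=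
  writer_risk G K S Y F rhow p0 = buyer_risk G K S Y F rhob p0 /\
  writer_risk G K S Y F rhow p0 \is a fin_num.

End Defs.

From HB Require Import structures.
From mathcomp Require Import all_boot all_order all_algebra.
From mathcomp Require Import all_classical all_reals all_analysis.
From mathcomp Require Import lra.
Set Implicit Arguments. Unset Strict Implicit. Unset Printing Implicit Defensive.
Import Order.TTheory GRing.Theory Num.Theory.
Local Open Scope classical_set_scope.
Local Open Scope ring_scope.
Local Open Scope ereal_scope.

(* Only cash additivity of the risk measures matters: adding cash [c] to the
   initial wealth shifts every terminal wealth by [c], hence every risk by [-c],
   and this shift commutes with the inner sup/inf over stopping times and the
   outer inf over strategies.  So [varrho^w(p) = varrho^w(0) - p] and
   [varrho^b(p) = varrho^b(0) + p], and these two lines meet at a real [p]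
   exactly when both intercepts are finite, namely at their midpoint. *)

Lemma ereal_sup_image_addr (R : realType) (T : Type) (A : set T)
    (f : T -> \bar R) (c : R) :
  ereal_sup [set f x + c%:E | x in A] = ereal_sup (f @` A) + c%:E.
Proof.
apply/le_anti/andP; split.
  apply/ereal_supP => _ [x Ax <-]; rewrite leeD2r //.
  by apply: ereal_sup_ubound; exists x.
rewrite -leeBrDr //; apply/ereal_supP => _ [x Ax <-].
by rewrite leeBrDr //; apply: ereal_sup_ubound; exists x.
Qed.

Lemma ereal_inf_image_addr (R : realType) (T : Type) (A : set T)
    (f : T -> \bar R) (c : R) :
  ereal_inf [set f x + c%:E | x in A] = ereal_inf (f @` A) + c%:E.
Proof.
rewrite !ereal_infEN !image_comp.
rewrite (eq_imagel (f' := fun x => - f x + (- c)%:E)); last first.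
  by move=> x _; rewrite /= fin_num_oppeD // EFinN.
by rewrite ereal_sup_image_addr fin_num_oppeD // EFinN oppeK.
Qed.

Section CashShift.
Variables (R : realType) (d0 : measure_display) (Omega : measurableType d0).
Variables (G : nat -> set (set Omega)) (K : nat).
Variables (d : measure_display) (V : measurableType d).
Variables (S : nat -> Omega -> R) (Y : nat -> Omega -> V) (F : nat -> R -> V -> R).
Variable rho : (Omega -> R) -> R.
Hypothesis rho_cash : forall (X : Omega -> R) (c : R),
  rho (fun w => X w + c)%R = (rho X + c)%R.

Lemma writer_risk_shift (p : R) :
  writer_risk G K S Y F rho p = writer_risk G K S Y F rho 0 - p%:E.
Proof.
rewrite /writer_risk -ereal_inf_image_addr; congr ereal_inf.
apply: eq_imagel => xx _; rewrite -ereal_sup_image_addr; congr ereal_sup.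
apply: eq_imagel => tau _; rewrite -EFinD -rho_cash; congr (rho _)%:E.
by apply/funext => w; rewrite /terminal_wealth; lra.
Qed.

Lemma buyer_risk_shift (p : R) :
  buyer_risk G K S Y F rho p = buyer_risk G K S Y F rho 0 + p%:E.
Proof.
rewrite /buyer_risk -ereal_inf_image_addr; congr ereal_inf.
apply: eq_imagel => xx _; rewrite -ereal_inf_image_addr; congr ereal_inf.
apply: eq_imagel => tau _; rewrite -EFinD -rho_cash; congr (rho _)%:E.
by apply/funext => w; rewrite /terminal_wealth; lra.
Qed.

End CashShift.

Section BalancingShift.
Variable R : realFieldType.

Lemma balancing_shift_fin (W B : \bar R) (p : R) :
  W - p%:E = B + p%:E -> W - p%:E \is a fin_num ->
  [/\ W \is a fin_num, B \is a fin_num & p%:E = (W - B) * (2^-1)%:E].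
Proof.
case: W => [w| |]; case: B => [b| |] //= -[balance] _; split => //.
by rewrite -EFinB -EFinM; congr _%:E; lra.
Qed.

Lemma exists_balancing_shift (W B : \bar R) :
  W \is a fin_num -> B \is a fin_num ->
  exists p : R, W - p%:E = B + p%:E /\ W - p%:E \is a fin_num.
Proof.
move=> /fineK <- /fineK <-; exists ((fine W - fine B) / 2)%R.
by rewrite -!EFinD; split => //; congr _%:E; lra.
Qed.

End BalancingShift.

Theorem lemma4 (R : realType) (d0 : measure_display) (Omega : measurableType d0)
  (P : probability Omega R) (G : nat -> set (set Omega)) (K : nat)
  (d : measure_display) (V : measurableType d)
  (S : nat -> Omega -> R) (Y : nat -> Omega -> V) (F : nat -> R -> V -> R)
  (rhow rhob : (Omega -> R) -> R) :
  filtration G K -> adapted G K S -> adapted G K Y ->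
  convex_risk_measure rhow -> convex_risk_measure rhob ->
  ((exists p0 : R, equal_risk_price G K S Y F rhow rhob p0) <->
     ((- buyer_risk G K S Y F rhob 0)%E \is a fin_num /\
      writer_risk G K S Y F rhow 0 \is a fin_num)) /\
  (forall p0 : R, equal_risk_price G K S Y F rhow rhob p0 ->
     (p0%:E = (writer_risk G K S Y F rhow 0 - buyer_risk G K S Y F rhob 0)
              * (2^-1)%:E)%E).
Proof.
move=> _ _ _ [_ cash_w _ _] [_ cash_b _ _].
set W0 := writer_risk G K S Y F rhow 0; set B0 := buyer_risk G K S Y F rhob 0.
have balance p : equal_risk_price G K S Y F rhow rhob p <->
    W0 - p%:E = B0 + p%:E /\ W0 - p%:E \is a fin_num.
  by rewrite /equal_risk_price writer_risk_shift // buyer_risk_shift.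
rewrite fin_numN; split; first split.
- by case=> p /balance [/balancing_shift_fin/[apply]] [].
- move=> [B0_fin W0_fin]; have [p ?] := exists_balancing_shift W0_fin B0_fin.
  by exists p; apply/balance.
- by move=> p /balance [/balancing_shift_fin/[apply]] [].
Qed.
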